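(* Let $p_1\ge p_2\ge\cdots\ge p_n$ be positive integers (not necessarily distinct). Let $q_1>q_2>\cdots>q_m$ be the distinct values among $p_1,\dots,p_n$. Then the number of distinct sequences in $\{S_c((p_1,\dots,p_n)) : c\in[0,1]\}$ equals the number of distinct sequences in $\{S_c((q_1,\dots,q_m)) : c\in[0,1]\}$.
   Context: Stationary divisor method with cut point $c\in[0,1]$ for a vote vector $\mathbf v=(v_1,\dots,v_r)$ with $v_1\ge\cdots\ge v_r$: seats are allocated one at a time. Initially each party $i$ has $a_i=0$ seats; each next seat goes to a party $i$ maximizing $v_i/(a_i+c)$, whose $a_i$ then increases by $1$. Ties are broken in favor of the smallest index. For $c=0$ the convention is that $v_i/0>v_j/0$ whenever $v_i>v_j$, ties among equal $v_i/0$ are broken by smallest index, and $v_i/0>v_j/k$ for every $k>0$. $S_c(\mathbf v)$ is the infinite sequence of indices of the parties receiving successive seats. *)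

From HB Require Import structures.
From mathcomp Require Import all_boot all_order all_algebra.
From mathcomp Require Import boolp classical_sets functions cardinality reals.
Set Implicit Arguments. Unset Strict Implicit. Unset Printing Implicit Defensive.
Import Order.TTheory GRing.Theory Num.Theory.
Local Open Scope ring_scope.

(* Parties are indexed 0..r-1 (index i corresponds to party i+1 of the paper).
   [quot_gt vi di vj dj] : the quotient vi/di is strictly greater than vj/dj,
   with the paper's convention for division by 0 (di = 0 happens only when
   a_i = 0 and c = 0):  vi/0 > vj/0 iff vi > vj;  vi/0 > vj/k for every k > 0. *)
Definition quot_gt (R : realType) (vi : nat) (di : R) (vj : nat) (dj : R) : bool :=
  if di == 0 then (if dj == 0 then (vj < vi)%N else true)
  else if dj == 0 then false else (vj%:R / dj < vi%:R / di).

Definition next_party (R : realType) (c : R) (v a : seq nat) : nat :=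
  let r := size v in
  let d := fun i => (nth 0%N a i)%:R + c in
  find (fun i => all (fun j => ~~ quot_gt (nth 0%N v j) (d j) (nth 0%N v i) (d i))
                     (iota 0 r))
       (iota 0 r).

Definition divisor_step (R : realType) (c : R) (v a : seq nat) : seq nat :=
  incr_nth a (next_party c v a).

Definition seats_after (R : realType) (c : R) (v : seq nat) (k : nat) : seq nat :=
  iter k (divisor_step c v) (nseq (size v) 0%N).

(* S_c(v): the k-th entry (k = 0,1,2,...) is the (0-based) index of the party
   receiving seat number k+1. *)
Definition S_seq (R : realType) (c : R) (v : seq nat) : nat -> nat :=
  fun k => next_party c v (seats_after c v k).

From HB Require Import structures.
From mathcomp Require Import all_boot all_order all_algebra.
From mathcomp Require Import boolp classical_sets functions cardinality reals.
From mathcomp Require Import zify lra.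
Set Implicit Arguments. Unset Strict Implicit. Unset Printing Implicit Defensive.
Import Order.TTheory GRing.Theory Num.Theory.
Local Open Scope ring_scope.
Local Open Scope classical_set_scope.
Local Open Scope card_scope.

(* Let v' be v with a copy of party i inserted right after it.  Party i+1 of
   v' has the same votes as party i, and ties go to the smaller index, so in
   S_c(v') the two copies always win consecutively: every seat of party i in
   S_c(v) becomes the pair i, i+1, and every other seat is only renumbered.
   This rewriting of sequences does not depend on c and is injective, so c
   and c' give the same sequence for v' exactly when they do for v, and the
   two sets of sequences have the same cardinality.  Removing the repeated
   values of the sorted vector p one at a time yields q. *)

Lemma card_eq_image_same_kernel (T : choiceType) (U V : Type) (C : set T)
    (f : T -> U) (g : T -> V) :
  (forall c c', C c -> C c' -> (f c = f c' <-> g c = g c')) -> f @` C #= g @` C.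
Proof.
move=> fg; have [[t0 _] | /forallNP C0] := pselect (exists t, C t); last first.
  by rewrite (_ : C = set0) ?image_set0 ?card_eq00 //; apply/seteqP; split=> t // /C0.
pose h (y : U) : V := g (xget t0 [set c | C c /\ f c = y]).
have hf c : C c -> h (f c) = g c.
  move=> Cc; have [Cx] : [set c' | C c' /\ f c' = f c] (xget t0 [set c' | C c' /\ f c' = f c]).
    by apply: xgetPex; exists c.
  by move/(fg _ _ Cx Cc).
have -> : g @` C = h @` (f @` C).
  apply/seteqP; split => y.
    by case=> c Cc <-; exists (f c); [exists c | exact: hf].
  by case=> _ [c Cc <-] <-; exists c; rewrite ?hf.
apply: card_esym; apply: inj_card_eq => _ _ /set_mem[c Cc <-] /set_mem[c' Cc' <-].
by rewrite !hf // => /(fg _ _ Cc Cc').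
Qed.

Section Winner.
Variable R : realType.

Definition beats (a b : nat * R) := quot_gt a.1 a.2 b.1 b.2.

Lemma beats_irr a : ~~ beats a a.
Proof. by rewrite /beats /quot_gt; case: eqP => _; rewrite ?ltnn ?ltxx. Qed.

Lemma beats_trans a b c : beats a b -> beats b c -> beats a c.
Proof.
rewrite /beats /quot_gt; case: eqP => ha; case: eqP => hb; case: eqP => hc //.
- by move=> h1 h2; apply: ltn_trans h2 h1.
- by move=> h1 h2; apply: lt_trans h2 h1.
Qed.

Lemma beats_asym a b : beats a b -> ~~ beats b a.
Proof. by move=> hab; apply/negP => /(beats_trans hab); rewrite (negbTE (beats_irr a)). Qed.

Lemma beats_succ (x : nat) (d : R) : (0 < x)%N -> 0 <= d -> beats (x, d) (x, d + 1).
Proof.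
move=> x0 d0; rewrite /beats /quot_gt /=.
have d1 : 0 < d + 1 by rewrite ltr_wpDl.
rewrite (gt_eqF d1); case: eqP => // /eqP dn0.
have dp : 0 < d by rewrite lt_def dn0.
by rewrite ltr_pM2l ?ltr0n // ltf_pV2 ?posrE //; lra.
Qed.

Local Open Scope nat_scope.

Definition unbeaten (f : nat -> nat * R) r i := all (fun j => ~~ beats (f j) (f i)) (iota 0 r).

Definition winner (f : nat -> nat * R) r := find (unbeaten f r) (iota 0 r).

Lemma exists_unbeaten f r : 0 < r -> exists2 i, i < r & unbeaten f r i.
Proof.
elim: r => // r IH _; case: (posnP r) => [-> | /IH[i ir fi]].
  by exists 0; rewrite /unbeaten //= beats_irr.
have unbeatenS j : unbeaten f r.+1 j = unbeaten f r j && ~~ beats (f r) (f j).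
  by rewrite /unbeaten -addn1 iotaD all_cat /= add0n andbT.
have [fri | nfri] := boolP (beats (f r) (f i)); last first.
  by exists i; rewrite ?unbeatenS ?fi ?nfri // ltnS ltnW.
exists r => //; rewrite unbeatenS beats_irr andbT.
apply/allP => j; rewrite mem_iota add0n => jr.
apply/negP => /beats_trans/(_ fri) fji.
by move/allP: fi => /(_ j); rewrite mem_iota add0n jr fji => /(_ isT).
Qed.

Lemma find_iotaP (P : pred nat) r : (exists2 i, i < r & P i) ->
  [/\ find P (iota 0 r) < r, P (find P (iota 0 r))
    & forall j, j < find P (iota 0 r) -> ~~ P j].
Proof.
case=> i ir Pi.
have hP : has P (iota 0 r) by apply/hasP; exists i; rewrite ?mem_iota.
have kr : find P (iota 0 r) < r by move: hP; rewrite has_find size_iota.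
split=> //; first by have := nth_find 0 hP; rewrite nth_iota.
move=> j jk; have := before_find 0 jk.
by rewrite nth_iota ?add0n => [-> | ]; last exact: ltn_trans jk kr.
Qed.

Lemma winnerP f r : 0 < r ->
  [/\ winner f r < r, unbeaten f r (winner f r) &
      forall j, j < winner f r -> ~~ unbeaten f r j].
Proof. by move=> r0; apply: find_iotaP; apply: exists_unbeaten. Qed.

Lemma winnerE f r i : i < r -> unbeaten f r i ->
  (forall j, j < i -> ~~ unbeaten f r j) -> winner f r = i.
Proof.
move=> ir fi before_i; have [wr fw before_w] := winnerP f (leq_ltn_trans (leq0n i) ir).
by case: (ltngtP (winner f r) i) => // [/before_i | /before_w]; rewrite ?fi ?fw.
Qed.

Lemma unbump_bumpS i w : unbump i (bump i.+1 w) = w.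
Proof. by rewrite /unbump /bump; case: ltngtP => //=; lia. Qed.

Lemma unbeaten_unbump f r i j : i < r ->
  unbeaten (f \o unbump i) r.+1 j = unbeaten f r (unbump i j).
Proof.
move=> ir; apply/allP/allP => fj k; rewrite mem_iota add0n => kr.
  rewrite -[k](unbump_bumpS i); apply: fj.
  by rewrite mem_iota add0n /bump; case: (ltnP i k) => /=; lia.
by apply: fj; rewrite mem_iota add0n /unbump; case: (ltnP i k) => /=; lia.
Qed.

Lemma winner_unbump f r i : i < r -> winner (f \o unbump i) r.+1 = bump i.+1 (winner f r).
Proof.
move=> ir; have [wr fw before_w] := winnerP f (leq_ltn_trans (leq0n i) ir).
apply: winnerE; rewrite ?unbeaten_unbump ?unbump_bumpS //.
  by rewrite /bump; case: (ltnP i (winner f r)) => /=; lia.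
move=> j jw; rewrite unbeaten_unbump //; apply: before_w.
by move: jw; rewrite /bump /unbump; case: ltngtP => /=; case: ltngtP => /=; lia.
Qed.

(* Once the first copy of party [i] has won a seat, the second copy holds the
   winning quotient and beats it. *)
Lemma winner_unbump_incr f r i : i < r -> 0 < (f i).1 -> (0 <= (f i).2)%R ->
  winner f r = i ->
  winner (fun j => if j == i then ((f i).1, ((f i).2 + 1)%R) else f (unbump i j)) r.+1
  = i.+1.
Proof.
move=> ir x0 d0 wi; have [_ fi before_i] := winnerP f (leq_ltn_trans (leq0n i) ir).
rewrite wi in fi before_i.
have i_beats_incr : beats (f i) ((f i).1, ((f i).2 + 1)%R).
  by case: (f i) x0 d0 => x d /= x0 d0; apply: beats_succ.
have unbump_iS : unbump i i.+1 = i by rewrite /unbump ltnSn subn1.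
have iS_neq : (i.+1 == i) = false by rewrite gtn_eqF.
apply: winnerE => //.
- rewrite /unbeaten iS_neq unbump_iS.
  apply/allP => k; rewrite mem_iota add0n => kr.
  case: eqP => [_ | /eqP ki]; first exact: beats_asym.
  by move/allP: fi; apply; rewrite mem_iota add0n /unbump; case: (ltnP i k) => /=; lia.
move=> j; rewrite ltnS leq_eqVlt => /orP[/eqP -> | ji].
  apply/allPn; exists i.+1; first by rewrite mem_iota add0n ltnS.
  by rewrite eqxx iS_neq unbump_iS negbK; exact: i_beats_incr.
have /allPn[k] := before_i _ ji; rewrite mem_iota add0n negbK => kr fkj.
apply/allPn; exists (bump i k).
  by rewrite mem_iota add0n /bump; case: (leqP i k) => /=; lia.
rewrite eq_sym (negbTE (neq_bump i k)) bumpK (ltn_eqF ji) negbK.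
by rewrite /unbump (_ : (i < j) = false) ?subn0 //; lia.
Qed.
End Winner.

Section Duplicate.
Local Open Scope nat_scope.

Definition dup (i : nat) (s : seq nat) := take i.+1 s ++ drop i s.

Lemma size_dup i s : i < size s -> size (dup i s) = (size s).+1.
Proof. by move=> si; rewrite size_cat size_take size_drop; case: ifP; lia. Qed.

Lemma nth_dup i s j : i < size s -> nth 0 (dup i s) j = nth 0 s (unbump i j).
Proof.
move=> si; rewrite nth_cat size_take (_ : (if i.+1 < size s then _ else _) = i.+1);
  last by case: ifP; lia.
rewrite /unbump; case: (ltnP j i.+1) => ji.
  by rewrite subn0 nth_take.
by rewrite nth_drop subn1; congr nth; lia.
Qed.

Lemma mem_dup i s : i < size s -> dup i s =i s.
Proof.
move=> si x; apply/idP/idP; rewrite mem_cat.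
  by case/orP => [/mem_take | /mem_drop].
rewrite -{1}(cat_take_drop i.+1 s) mem_cat (drop_nth 0 si) in_cons.
by case/orP => [-> // | ->]; rewrite !orbT.
Qed.

Lemma dup_incr_nth s i w : i < size s -> w < size s -> w != i ->
  dup i (incr_nth s w) = incr_nth (dup i s) (bump i.+1 w).
Proof.
move=> si ws wi; have si' : i < size (incr_nth s w) by rewrite size_incr_nth ws.
apply: (@eq_from_nth _ 0).
  rewrite size_dup // !size_incr_nth size_dup // ws.
  by rewrite (_ : bump i.+1 w < (size s).+1) //; rewrite /bump; case: (ltnP i w) => /=; lia.
move=> j _; rewrite nth_dup // !nth_incr_nth nth_dup //; congr (_ + _).
rewrite /unbump /bump; case: (ltnP i j) => /=; case: (ltnP i w) => /=;
  case: eqP; case: eqP => //; lia.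
Qed.

Lemma dup_incr_nth_split s i : i < size s ->
  dup i (incr_nth s i) = incr_nth (incr_nth (dup i s) i) i.+1.
Proof.
move=> si; have si' : i < size (incr_nth s i) by rewrite size_incr_nth si.
apply: (@eq_from_nth _ 0).
  by rewrite size_dup // !size_incr_nth size_dup // si ltnS (ltnW si) ltnS si.
move=> j _; rewrite nth_dup // !nth_incr_nth nth_dup // addnA; congr (_ + _).
by rewrite /unbump; case: (ltnP i j) => /=; case: eqP; case: eqP; case: eqP => //=; lia.
Qed.
End Duplicate.

Section DivisorMethod.
Variables (R : realType) (c : R).
Local Open Scope nat_scope.

Definition priority (v a : seq nat) (j : nat) : nat * R :=
  (nth 0 v j, ((nth 0 a j)%:R + c)%R).

Lemma next_partyE v a : next_party c v a = winner (priority v a) (size v).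
Proof. by []. Qed.

Lemma next_party_lt v a : 0 < size v -> next_party c v a < size v.
Proof. by move=> v0; rewrite next_partyE; case: (winnerP (priority v a) v0). Qed.

Lemma seats_afterS v k : seats_after c v k.+1 = divisor_step c v (seats_after c v k).
Proof. by []. Qed.

Lemma size_seats_after v k : 0 < size v -> size (seats_after c v k) = size v.
Proof.
move=> v0; elim: k => [|k IH]; first by rewrite size_nseq.
by rewrite seats_afterS size_incr_nth IH next_party_lt.
Qed.

Lemma next_party_dup v a i : i < size v -> size a = size v ->
  next_party c (dup i v) (dup i a) = bump i.+1 (next_party c v a).
Proof.
move=> iv av; rewrite !next_partyE size_dup // -winner_unbump //; congr winner.
by apply/funext => j; rewrite /priority /= !nth_dup ?av.
Qed.

Lemma next_party_dup_split v a i : (0 <= c)%R -> i < size v -> size a = size v ->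
  0 < nth 0 v i -> next_party c v a = i ->
  next_party c (dup i v) (incr_nth (dup i a) i) = i.+1.
Proof.
move=> c0 iv av vi0; rewrite !next_partyE size_dup // => wi.
rewrite -(@winner_unbump_incr _ (priority v a) _ _ iv vi0 _ wi) ?addr_ge0 ?ler0n //.
congr winner.
apply/funext => j; rewrite /priority /= nth_incr_nth !nth_dup ?av //.
case: eqP => [-> | /eqP ji]; last by rewrite eq_sym (negbTE ji).
by rewrite eqxx /unbump ltnn subn0 add1n -natr1 addrAC.
Qed.
End DivisorMethod.

Section Stretch.
Local Open Scope nat_scope.
Variable i : nat.

(* If [t] is S_c(v), [stretch t k] is the position in S_c(dup i v) of the
   seat corresponding to the [k]-th seat of S_c(v): seats of party [i] count
   twice. *)
Fixpoint stretch (t : nat -> nat) (k : nat) : nat :=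
  if k is k'.+1 then stretch t k' + (t k' == i).+1 else 0.

Lemma eq_stretch t t' k : (forall j, j < k -> t j = t' j) -> stretch t k = stretch t' k.
Proof. by elim: k => //= k IH tt'; rewrite tt' ?IH // => j jk; apply/tt'/ltnW. Qed.

Lemma stretch_cover t n : exists k, stretch t k <= n < stretch t k.+1.
Proof.
have stretchS k : stretch t k < stretch t k.+1 by rewrite /= addnS ltnS leq_addr.
elim: n => [|n [k /andP[lo hi]]]; first by exists 0.
have [n_hi | hi_n] := ltnP n.+1 (stretch t k.+1).
  by exists k; rewrite n_hi (leq_trans lo).
by exists k.+1; rewrite hi_n (leq_trans _ (stretchS k.+1)).
Qed.

Definition expands (t s : nat -> nat) : Prop :=
  forall k, s (stretch t k) = bump i.+1 (t k) /\ (t k = i -> s (stretch t k).+1 = i.+1).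

Lemma expands_inj t t' s s' : expands t s -> expands t' s' -> (s = s' <-> t = t').
Proof.
move=> ts t's'; split => [ss' | tt'].
  apply/funext => k; elim/ltn_ind: k => k IHk.
  have [tsk _] := ts k; have [t's'k _] := t's' k.
  by apply: (can_inj (@bumpK i.+1)); rewrite -tsk -t's'k ss' (eq_stretch IHk).
subst t'; apply/funext => n; have [k /andP[lo hi]] := stretch_cover t n.
have [tsk tsk1] := ts k; have [ts'k ts'k1] := t's' k.
move: hi; rewrite /=; case: (eqVneq (t k) i) => [tki | tki]; last first.
  by rewrite addn1 => hi; rewrite (_ : n = stretch t k) ?tsk ?ts'k //; lia.
rewrite addn2 => hi.
have [-> | ->] : n = stretch t k \/ n = (stretch t k).+1 by lia.
  by rewrite tsk ts'k.
by rewrite tsk1 ?ts'k1.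
Qed.
End Stretch.

Section DuplicateParty.
Variables (R : realType) (c : R) (v : seq nat) (i : nat).
Hypotheses (c0 : (0 <= c)%R) (iv : (i < size v)%N) (vi0 : (0 < nth 0 v i)%N).
Local Open Scope nat_scope.

Lemma seats_after_dup k :
  seats_after c (dup i v) (stretch i (S_seq c v) k) = dup i (seats_after c v k).
Proof.
have v0 : 0 < size v by apply: leq_ltn_trans iv.
elim: k => [|k IH].
  apply: (@eq_from_nth _ 0); first by rewrite size_nseq !size_dup ?size_nseq.
  by move=> j _; rewrite nth_dup ?size_nseq // !nth_nseq; case: ifP; case: ifP.
rewrite /= /S_seq; have av' := size_seats_after c k v0.
case: eqP => [wi | /eqP wi].
  rewrite addn2 !seats_afterS IH /divisor_step next_party_dup // wi /bump ltnn add0n.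
  by rewrite next_party_dup_split // dup_incr_nth_split ?av'.
rewrite addn1 seats_afterS IH /divisor_step next_party_dup //.
by rewrite dup_incr_nth ?av' ?next_party_lt.
Qed.

Lemma S_seq_dup_expands : expands i (S_seq c v) (S_seq c (dup i v)).
Proof.
have v0 : 0 < size v by apply: leq_ltn_trans iv.
move=> k; rewrite /S_seq seats_after_dup next_party_dup ?size_seats_after //.
split=> // wi; rewrite seats_afterS seats_after_dup /divisor_step.
rewrite next_party_dup ?size_seats_after //.
by rewrite wi /bump ltnn add0n next_party_dup_split // size_seats_after.
Qed.
End DuplicateParty.

Lemma card_S_seq_dup (R : realType) (C : set R) (v : seq nat) i :
  (forall c, C c -> (0 <= c)%R) -> (i < size v)%N -> all (fun x => 0 < x)%N v ->
  [set S_seq c (dup i v) | c in C] #= [set S_seq c v | c in C].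
Proof.
move=> C0 iv v0; apply: card_eq_image_same_kernel => c c' /C0 c0 /C0 c'0.
have vi0 := all_nthP 0 v0 i iv.
exact: expands_inj (S_seq_dup_expands c0 iv vi0) (S_seq_dup_expands c'0 iv vi0).
Qed.

Lemma geq_trans : transitive geq.
Proof. by move=> y x z h1 h2; apply: leq_trans h2 h1. Qed.

Lemma gtn_trans : transitive gtn.
Proof. by move=> y x z h1 h2; apply: ltn_trans h2 h1. Qed.

Lemma sorted_geq_not_uniq (s : seq nat) : sorted geq s -> ~~ uniq s ->
  exists i s', [/\ s = dup i s', (i < size s')%N & subseq s' s].
Proof.
elim: s => // a s IH sas; rewrite cons_uniq negb_and negbK.
case/orP => [as_ | /(IH (path_sorted sas))[i [s' [-> is' s's]]]]; last first.
  by exists i.+1, (a :: s'); rewrite /= eqxx.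
case: s as_ sas {IH} => // b s; rewrite in_cons => /orP[/eqP <- _ | as_].
  by exists 0%N, (a :: s); rewrite subseq_cons /dup /= take0.
case/andP => ab /(order_path_min geq_trans)/allP/(_ a as_) ba.
have <- : a = b by apply/anti_leq/andP.
by exists 0%N, (a :: s); rewrite subseq_cons /dup /= take0.
Qed.

Theorem mainTheorem19 (R : realType) (p q : seq nat) :
  sorted geq p -> all (fun x => (0 < x)%N) p ->
  sorted gtn q -> (forall x, (x \in q) = (x \in p)) ->
  [set S_seq c p | c in [set c : R | (0 <= c <= 1)%R]]
    #= [set S_seq c q | c in [set c : R | (0 <= c <= 1)%R]].
Proof.
move=> + + qs; have [n] := ubnP (size p); elim: n p => // n IH p pn ps p0 qp.
have [pu | /(sorted_geq_not_uniq ps)[i [p' [pE ip' p'p]]]] := boolP (uniq p).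
  suff -> : q = p by [].
  by apply: (irr_sorted_eq gtn_trans) => //; [exact: ltnn | rewrite gtn_sorted_uniq_geq pu].
have p'0 : all (fun x => (0 < x)%N) p' by apply/allP => x /(mem_subseq p'p)/(allP p0).
rewrite pE; apply: card_eq_trans (card_S_seq_dup _ ip' p'0) (IH p' _ _ p'0 _).
- by move=> c /andP[].
- by move: pn; rewrite pE size_dup.
- exact: (subseq_sorted geq_trans p'p ps).
- by move=> x; rewrite qp pE mem_dup.
Qed.
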